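(* Let $\mathbf b=b_0b_1b_2\cdots\in\{1,-1\}^{\mathbb N}$. Let $t\ge1$, $0\le u\le t$ and $0\le p\le 2^{t-u}-1$ be integers. Then (1) for each $k\ge0$ such that $k\le u-2$ or $k\ge t-1$, we have $\mathcal E_{k,b_k}(\ell_{t-1}+2^u p,\,2^u,\,2^{t-u})=\mathbf 0$; (2) moreover, $\mathcal E_{k,b}(\ell_{t-1}+2^u p,\,2^u,\,2^{t-u})=\mathbf 0$ for both $b\in\{-1,1\}$ and each $k\ge0$ such that $k\le u-2$ or $k\ge t+3$.
   Context: For integers $a$ and $N\ge1$, $(a \bmod N)$ denotes the unique integer in $\{0,\dots,N-1\}$ congruent to $a$ modulo $N$; we write $a\succ c \pmod N$ iff $(a\bmod N)>(c\bmod N)$. For $b\in\{-1,1\}$, $k\ge0$ and integers $0\le\ell\le n$, let $\varepsilon_{k,b}(\ell,n)=1$ if $n-\ell \succ (2+b)\cdot 2^k-(\ell+1) \pmod{2^{k+2}}$ and $\varepsilon_{k,b}(\ell,n)=0$ otherwise. For $s\ge0$, $d,m\ge1$, $\mathcal E_{k,b}(s,d,m)=\big(\varepsilon_{k,b}(s+jd,s+(j+1)d)\big)_{j=0}^{m-1}$, and $\mathbf 0$ is the zero vector. For $x_0,x_1,x_2,x_3\in\{1,-1\}$, $\ell(x_0,x_1,x_2,x_3)$ is given by the table (listing $(x_0,x_1,x_2,x_3)\mapsto \ell$): $(1,1,1,1)\mapsto7$, $(-1,1,1,1)\mapsto1$, $(1,-1,1,1)\mapsto3$, $(-1,-1,1,1)\mapsto5$,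 $(1,1,-1,1)\mapsto7$, $(-1,1,-1,1)\mapsto9$, $(1,-1,-1,1)\mapsto11$, $(-1,-1,-1,1)\mapsto5$, $(1,1,1,-1)\mapsto23$, $(-1,1,1,-1)\mapsto1$, $(1,-1,1,-1)\mapsto3$, $(-1,-1,1,-1)\mapsto21$, $(1,1,-1,-1)\mapsto23$, $(-1,1,-1,-1)\mapsto9$, $(1,-1,-1,-1)\mapsto11$, $(-1,-1,-1,-1)\mapsto21$. For $t\ge0$, $\ell_t:=2^t\,\ell(b_t,b_{t+1},b_{t+2},b_{t+3})$. *)

From Stdlib Require Import ZArith List.
Open Scope Z_scope.

Definition succ_mod (a c N : Z) : bool := Z.ltb (c mod N) (a mod N).

Definition eps (k : nat) (b l n : Z) : Z :=
  if succ_mod (n - l) ((2 + b) * 2 ^ Z.of_nat k - (l + 1)) (2 ^ (Z.of_nat k + 2))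
  then 1 else 0.

Definition calE (k : nat) (b s d : Z) (m : nat) : list Z :=
  map (fun j : nat => eps k b (s + Z.of_nat j * d) (s + (Z.of_nat j + 1) * d))
      (seq 0 m).

Definition zerovec (m : nat) : list Z := repeat 0 m.

Definition ell4 (x0 x1 x2 x3 : Z) : Z :=
  match Z.eqb x0 1, Z.eqb x1 1, Z.eqb x2 1, Z.eqb x3 1 with
  | true,  true,  true,  true  => 7
  | false, true,  true,  true  => 1
  | true,  false, true,  true  => 3
  | false, false, true,  true  => 5
  | true,  true,  false, true  => 7
  | false, true,  false, true  => 9
  | true,  false, false, true  => 11
  | false, false, false, true  => 5
  | true,  true,  true,  false => 23
  | false, true,  true,  false => 1
  | true,  false, true,  false => 3
  | false, false, true,  false => 21
  | true,  true,  false, false => 23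
  | false, true,  false, false => 9
  | true,  false, false, false => 11
  | false, false, false, false => 21
  end.

Definition ell_t (bs : nat -> Z) (t : nat) : Z :=
  2 ^ Z.of_nat t * ell4 (bs t) (bs (t + 1)%nat) (bs (t + 2)%nat) (bs (t + 3)%nat).

(* Write the window of step d = 2^u starting at l_{t-1} + 2^u p as l = 2^(t-1) L + x,
   where L = ell(b_{t-1},...,b_{t+2}) and 0 <= x, x + 2d <= 2^(t+1).  For k >= t-1 the
   modulus 2^(k+2) is 2^(t-1) P with P = 2^(k-t+3) >= 4, and the threshold
   (2+b) 2^k - (l+1) reduces to ((2+b) 2^(k-t+1) - L) 2^(t-1) - x - 1.  If
   (2+b) 2^(k-t+1) - L is 0 or at least 4 modulo P, this residue is at least d, so no
   entry of the vector is 1; the table of ell is exactly what makes this hold for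
   k = t-1,...,t+2 with b = b_k, and for k >= t+3 it holds for every b because L is one
   of 1,3,5,7,9,11,21,23.  For k <= u-2 the step d vanishes modulo 2^(k+2). *)

From Stdlib Require Import ZArith List Lia.
Open Scope Z_scope.

Lemma calE_eq_zerovec (k : nat) (b s d : Z) (m : nat) :
  (forall j : nat, (j < m)%nat ->
     d mod 2 ^ (Z.of_nat k + 2) <=
     ((2 + b) * 2 ^ Z.of_nat k - (s + Z.of_nat j * d + 1)) mod 2 ^ (Z.of_nat k + 2)) ->
  calE k b s d m = zerovec m.
Proof.
  intros Hle. unfold calE, zerovec.
  rewrite <- (length_seq m 0) at 2. rewrite <- map_const.
  apply map_ext_in. intros j Hj. apply in_seq in Hj.
  unfold eps, succ_mod.
  replace (s + (Z.of_nat j + 1) * d - (s + Z.of_nat j * d)) with d by ring.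
  specialize (Hle j ltac:(lia)).
  destruct (_ <? _) eqn:Hlt; [apply Z.ltb_lt in Hlt; lia | reflexivity].
Qed.

Lemma calE_zero_low (k u : nat) (b s : Z) (m : nat) :
  (k + 2 <= u)%nat -> calE k b s (2 ^ Z.of_nat u) m = zerovec m.
Proof.
  intros Hku. apply calE_eq_zerovec. intros j _.
  assert (Hdvd : 2 ^ Z.of_nat u mod 2 ^ (Z.of_nat k + 2) = 0).
  { replace (Z.of_nat u) with ((Z.of_nat u - (Z.of_nat k + 2)) + (Z.of_nat k + 2)) by lia.
    rewrite Z.pow_add_r, Z.mod_mul by (try lia; apply Z.pow_nonzero; lia).
    reflexivity. }
  rewrite Hdvd. apply Z.mod_pos_bound, Z.pow_pos_nonneg; lia.
Qed.

(* The constant 4 matches the room x + 2d <= 4T left by the window in [mod_scaled_ge]. *)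
Definition gap (M L P : Z) : Prop := (M - L) mod P = 0 \/ 4 <= (M - L) mod P.

Lemma mod_scaled_ge (P T x d M L : Z) :
  4 <= P -> 1 <= T -> 0 <= x -> 1 <= d -> x + 2 * d <= 4 * T -> gap M L P ->
  d <= (M * T - (L * T + x + 1)) mod (P * T).
Proof.
  intros HP HT Hx Hd Hxd Hgap. unfold gap in Hgap.
  set (w := (M - L) mod P) in *.
  assert (Hw : 0 <= w < P) by (apply Z.mod_pos_bound; lia).
  assert (Hdiv : M - L = P * ((M - L) / P) + w) by (apply Z.div_mod; lia).
  assert (Hred : M * T - (L * T + x + 1) = (w * T - x - 1) + (M - L) / P * (P * T)).
  { transitivity ((M - L) * T - x - 1); [ring|]. rewrite Hdiv at 1; ring. }
  rewrite Hred, Z.mod_add by nia.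
  destruct Hgap as [Hw0 | Hw4].
  - rewrite Hw0. replace (0 * T - x - 1) with ((P * T - x - 1) + (-1) * (P * T)) by ring.
    rewrite Z.mod_add, Z.mod_small by nia. nia.
  - rewrite Z.mod_small by nia. nia.
Qed.

Lemma ell4_cases (x0 x1 x2 x3 : Z) :
  let L := ell4 x0 x1 x2 x3 in
  L = 1 \/ L = 3 \/ L = 5 \/ L = 7 \/ L = 9 \/ L = 11 \/ L = 21 \/ L = 23.
Proof.
  unfold ell4; destruct (x0 =? 1), (x1 =? 1), (x2 =? 1), (x3 =? 1); cbn; tauto.
Qed.

Lemma ell4_gap_low (bs : nat -> Z) (hb : forall i : nat, bs i = 1 \/ bs i = -1)
  (n i : nat) : (i < 4)%nat ->
  gap ((2 + bs (n + i)%nat) * 2 ^ Z.of_nat i)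
      (ell4 (bs n) (bs (n + 1)%nat) (bs (n + 2)%nat) (bs (n + 3)%nat))
      (2 ^ (Z.of_nat i + 2)).
Proof.
  intros Hi. destruct i as [|[|[|[|i]]]]; try lia; rewrite ?Nat.add_0_r;
  destruct (hb n) as [-> | ->], (hb (n + 1)%nat) as [-> | ->],
    (hb (n + 2)%nat) as [-> | ->], (hb (n + 3)%nat) as [-> | ->];
  unfold gap; cbn; lia.
Qed.

Lemma ell4_gap_high (b x0 x1 x2 x3 : Z) (i : nat) :
  (4 <= i)%nat -> b = 1 \/ b = -1 ->
  gap ((2 + b) * 2 ^ Z.of_nat i) (ell4 x0 x1 x2 x3) (2 ^ (Z.of_nat i + 2)).
Proof.
  intros Hi Hb. pose proof (ell4_cases x0 x1 x2 x3) as HL; cbv zeta in HL.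
  set (L := ell4 x0 x1 x2 x3) in *. unfold gap.
  rewrite Z.pow_add_r by lia.
  destruct (Nat.eq_dec i 4) as [-> | Hi5].
  - destruct Hb as [-> | ->];
      destruct HL as [-> | [-> | [-> | [-> | [-> | [-> | [-> | ->]]]]]]]; cbn; lia.
  - assert (H32 : 32 <= 2 ^ Z.of_nat i).
    { change 32 with (2 ^ 5). apply Z.pow_le_mono_r; lia. }
    right. rewrite Z.mod_small; destruct Hb as [-> | ->]; lia.
Qed.

Lemma calE_zero_high (t u i : nat) (b L p : Z) :
  (1 <= t)%nat -> (u <= t)%nat -> 0 <= p <= 2 ^ Z.of_nat (t - u) - 1 ->
  gap ((2 + b) * 2 ^ Z.of_nat i) L (2 ^ (Z.of_nat i + 2)) ->
  calE (t - 1 + i) b (2 ^ Z.of_nat (t - 1) * L + 2 ^ Z.of_nat u * p) (2 ^ Z.of_nat u)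
       (2 ^ (t - u)) = zerovec (2 ^ (t - u)).
Proof.
  intros Ht Hu Hp Hgap. apply calE_eq_zerovec. intros j Hj.
  apply Nat2Z.inj_lt in Hj. rewrite Nat2Z.inj_pow in Hj.
  assert (HT : 0 < 2 ^ Z.of_nat (t - 1)) by (apply Z.pow_pos_nonneg; lia).
  assert (HD : 0 < 2 ^ Z.of_nat u) by (apply Z.pow_pos_nonneg; lia).
  assert (HP : 4 <= 2 ^ (Z.of_nat i + 2)).
  { change 4 with (2 ^ 2). apply Z.pow_le_mono_r; lia. }
  assert (HDR : 2 ^ Z.of_nat u * 2 ^ Z.of_nat (t - u) = 2 * 2 ^ Z.of_nat (t - 1)).
  { rewrite <- Z.pow_add_r, <- (Z.pow_succ_r 2) by lia. f_equal. lia. }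
  assert (Hmod : 2 ^ (Z.of_nat (t - 1 + i) + 2)
                 = 2 ^ (Z.of_nat i + 2) * 2 ^ Z.of_nat (t - 1)).
  { rewrite <- Z.pow_add_r by lia. f_equal. lia. }
  assert (Hk : 2 ^ Z.of_nat (t - 1 + i) = 2 ^ Z.of_nat i * 2 ^ Z.of_nat (t - 1)).
  { rewrite <- Z.pow_add_r by lia. f_equal. lia. }
  change (Z.of_nat 2) with 2 in Hj. rewrite Hmod, Hk.
  set (T := 2 ^ Z.of_nat (t - 1)) in *. set (D := 2 ^ Z.of_nat u) in *.
  rewrite (Z.mod_small D) by nia.
  replace ((2 + b) * (2 ^ Z.of_nat i * T) - (T * L + D * p + Z.of_nat j * D + 1))
    with ((2 + b) * 2 ^ Z.of_nat i * T - (L * T + (D * p + Z.of_nat j * D) + 1)) by ring.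
  apply mod_scaled_ge; [lia | lia | nia | lia | nia | exact Hgap].
Qed.

Theorem lemma5p2 (bs : nat -> Z) (hb : forall i : nat, bs i = 1 \/ bs i = -1)
  (t u : nat) (p : Z) (ht : (1 <= t)%nat) (hu : (u <= t)%nat)
  (hp0 : 0 <= p) (hp1 : p <= 2 ^ Z.of_nat (t - u) - 1) :
  (forall k : nat, ((k + 2 <= u)%nat \/ (t <= k + 1)%nat) ->
     calE k (bs k) (ell_t bs (t - 1) + 2 ^ Z.of_nat u * p) (2 ^ Z.of_nat u)
          (2 ^ (t - u))%nat = zerovec (2 ^ (t - u))%nat) /\
  (forall (b : Z) (k : nat), (b = 1 \/ b = -1) ->
     ((k + 2 <= u)%nat \/ (t + 3 <= k)%nat) ->
     calE k b (ell_t bs (t - 1) + 2 ^ Z.of_nat u * p) (2 ^ Z.of_nat u)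
          (2 ^ (t - u))%nat = zerovec (2 ^ (t - u))%nat).
Proof.
  unfold ell_t. split.
  - intros k [Hk | Hk]; [now apply calE_zero_low |].
    replace k with (t - 1 + (k + 1 - t))%nat by lia.
    apply calE_zero_high; try lia.
    destruct (Nat.lt_ge_cases (k + 1 - t) 4).
    + now apply ell4_gap_low.
    + apply ell4_gap_high; auto.
  - intros b k Hb [Hk | Hk]; [now apply calE_zero_low |].
    replace k with (t - 1 + (k + 1 - t))%nat by lia.
    apply calE_zero_high; try lia.
    apply ell4_gap_high; [lia | exact Hb].
Qed.
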